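(* Let $a,b$ be smooth real functions of one variable and $f(x,y)=a(x)x+b(x)y$. On any open set $U\subset\mathbb{R}^2$ on which the three foliations given by the level curves $x=\text{const}$, $y=\text{const}$ and $f(x,y)=\text{const}$ form a 3-web (i.e. are pairwise transversal), this 3-web is linearizable: near every point of $U$ there is a local diffeomorphism onto an open subset of $\mathbb{R}^2$ carrying the leaves of all three foliations onto (open pieces of) straight lines.
   Context: A 3-web on a 2-dimensional manifold is given by three foliations by smooth curves in general position (pairwise transversal). A 3-web is linear if all three foliations consist of straight lines; it is linearizable if it is locally equivalent to a linear web via a local diffeomorphism. *)

From Stdlib Require Import Reals.
Open Scope R_scope.

Definition pt := (R * R)%type.

Definition smooth1 (a : R -> R) : Prop :=
  exists D : nat -> R -> R,
    D O = a /\ forall (n : nat) (x : R), derivable_pt_lim (D n) x (D (S n) x).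

Definition open2 (U : pt -> Prop) : Prop :=
  forall p, U p -> exists e, 0 < e /\
    forall q, Rabs (fst q - fst p) < e -> Rabs (snd q - snd p) < e -> U q.

Definition partial_x (g : pt -> R) (p : pt) (l : R) : Prop :=
  derivable_pt_lim (fun t => g (t, snd p)) (fst p) l.
Definition partial_y (g : pt -> R) (p : pt) (l : R) : Prop :=
  derivable_pt_lim (fun t => g (fst p, t)) (snd p) l.

Definition cont2_at (h : pt -> R) (p : pt) : Prop :=
  forall e, 0 < e -> exists d, 0 < d /\
    forall q, Rabs (fst q - fst p) < d -> Rabs (snd q - snd p) < d ->
      Rabs (h q - h p) < e.

Definition smooth2 (V : pt -> Prop) (g : pt -> R) : Prop :=
  exists D : nat -> nat -> pt -> R,
    (forall p, V p -> D O O p = g p) /\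
    forall (i j : nat) (p : pt), V p ->
      partial_x (D i j) p (D (S i) j p) /\
      partial_y (D i j) p (D i (S j) p) /\
      cont2_at (D i j) p.

Definition grad_at (g : pt -> R) (p : pt) (v : pt) : Prop :=
  partial_x g p (fst v) /\ partial_y g p (snd v).

Definition transversal_at (g h : pt -> R) (p : pt) : Prop :=
  exists u v, grad_at g p u /\ grad_at h p v /\
    fst u * snd v - snd u * fst v <> 0.

Definition is_3web (U : pt -> Prop) (g1 g2 g3 : pt -> R) : Prop :=
  open2 U /\ forall p, U p ->
    transversal_at g1 g2 p /\ transversal_at g1 g3 p /\ transversal_at g2 g3 p.

Definition diffeo (V W : pt -> Prop) (phi psi : pt -> pt) : Prop :=
  open2 V /\ open2 W /\
  (forall q, V q -> W (phi q)) /\ (forall r, W r -> V (psi r)) /\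
  (forall q, V q -> psi (phi q) = q) /\ (forall r, W r -> phi (psi r) = r) /\
  smooth2 V (fun q => fst (phi q)) /\ smooth2 V (fun q => snd (phi q)) /\
  smooth2 W (fun r => fst (psi r)) /\ smooth2 W (fun r => snd (psi r)).

Definition leaves_to_lines (V : pt -> Prop) (phi : pt -> pt) (g : pt -> R) : Prop :=
  forall c : R, exists A B C : R, (A <> 0 \/ B <> 0) /\
    forall q, V q -> g q = c -> A * fst (phi q) + B * snd (phi q) = C.

Definition fab (a b : R -> R) (p : pt) : R := a (fst p) * fst p + b (fst p) * snd p.

(* With [F = f + K] normalised by [F p = 1], the map (x, y) |-> (1/F, y/F) straightens
   all three foliations at once.  It is a local diffeomorphism: its inverse is
   (X, Y) |-> (t, Y/X), where t solves the level equation (a(t) t + K) X + b(t) Y = 1,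
   whose t-derivative at the base point is the x-derivative of f there, nonzero because
   the foliations {y = c} and {f = c} are transversal.  The root t is found by the
   intermediate value theorem and differentiated by the mean value theorem; smoothness
   of every order then follows by differentiating symbolically rational expressions in
   x, y and the derivatives of a, b and t. *)

From Stdlib Require Import Reals Lra Psatz ClassicalEpsilon Classical.
Open Scope R_scope.

Lemma derivable_pt_lim_value f x l l' :
  derivable_pt_lim f x l -> l = l' -> derivable_pt_lim f x l'.
Proof. now intros H ->. Qed.

Lemma derivable_pt_lim_locally_ext f g x l d :
  derivable_pt_lim f x l -> 0 < d ->
  (forall t, Rabs (t - x) < d -> f t = g t) -> derivable_pt_lim g x l.
Proof.
  intros Hf Hd E eps Heps. destruct (Hf eps Heps) as [del Hdel].
  assert (Hm : 0 < Rmin del d) by (apply Rmin_pos; [apply cond_pos | lra]).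
  exists (mkposreal _ Hm). intros h Hh Hh'. simpl in Hh'.
  rewrite <- (E (x + h)), <- (E x).
  - apply Hdel; auto. apply Rlt_le_trans with (1 := Hh'), Rmin_l.
  - rewrite Rminus_diag, Rabs_R0; lra.
  - replace (x + h - x) with h by ring. apply Rlt_le_trans with (1 := Hh'), Rmin_r.
Qed.

Lemma derivable_pt_lim_inv f x l : derivable_pt_lim f x l -> f x <> 0 ->
  derivable_pt_lim (fun t => / f t) x (-1 * l * (/ f x * / f x)).
Proof.
  intros Hf Hn.
  apply derivable_pt_lim_locally_ext with (f := (fct_cte 1 / f)%F) (d := 1); [| lra |].
  - eapply derivable_pt_lim_value.
    + apply derivable_pt_lim_div; [apply derivable_pt_lim_const | exact Hf | exact Hn].
    + unfold fct_cte, Rsqr; field; auto.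
  - intros t _. unfold div_fct, fct_cte, Rdiv. ring.
Qed.

Lemma Rabs_close_half h Q0 : Rabs (h - Q0) < Rabs Q0 / 2 ->
  Rabs Q0 / 2 < Rabs h /\ Q0 * Q0 / 2 < Q0 * h.
Proof. intros H. split_Rabs; nra. Qed.

Lemma Rabs_between s t xi c r : Rmin s t <= xi <= Rmax s t ->
  Rabs (s - c) < r -> Rabs (t - c) < r -> Rabs (xi - c) < r /\ Rabs (xi - t) <= Rabs (s - t).
Proof. unfold Rmin, Rmax; destruct (Rle_dec s t); intros; split_Rabs; lra. Qed.

Lemma Rabs_lin_comb_le A B X Y X1 Y1 d : Rabs (X - X1) < d -> Rabs (Y - Y1) < d ->
  Rabs (A * (X - X1) + B * (Y - Y1)) <= (Rabs A + Rabs B) * d.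
Proof.
  intros H1 H2. eapply Rle_trans; [apply Rabs_triang |]. rewrite !Rabs_mult.
  pose proof (Rabs_pos A); pose proof (Rabs_pos B). nra.
Qed.

Lemma Rabs_scale_lt h u v e : 0 < e -> Rabs h < e / (Rabs u + Rabs v + 1) ->
  Rabs (h * u) < e /\ Rabs (h * v) < e.
Proof.
  intros He Hh. pose proof (Rabs_pos u). pose proof (Rabs_pos v). pose proof (Rabs_pos h).
  assert (Hh' : Rabs h * (Rabs u + Rabs v + 1) < e).
  { apply Rmult_lt_reg_r with (/ (Rabs u + Rabs v + 1)); [apply Rinv_0_lt_compat; lra |].
    rewrite Rmult_assoc, Rinv_r by lra. lra. }
  rewrite !Rabs_mult. split; nra.
Qed.

Lemma Rabs_div_lt a p m e : 0 < m -> m < Rabs p -> Rabs a < e * m -> Rabs (a / p) < e.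
Proof.
  intros Hm Hp Ha. assert (Hp0 : p <> 0) by (intro Z; rewrite Z, Rabs_R0 in Hp; lra).
  unfold Rdiv. rewrite Rabs_mult, Rabs_inv.
  apply Rmult_lt_reg_r with (Rabs p); [lra |].
  rewrite Rmult_assoc, Rinv_l, Rmult_1_r by lra.
  pose proof (Rabs_pos a). nra.
Qed.

(* A mean-value form of implicit differentiation: [P xi h] plays the role of the
   t-derivative of the defining equation at an intermediate point. *)
Lemma derivable_pt_lim_implicit (v : R -> R) (x1 t1 c q0 d0 : R) (P : R -> R -> R) :
  0 < q0 -> 0 < d0 -> v x1 = t1 ->
  (forall eta, 0 < eta -> exists d, 0 < d /\ forall xi h, Rabs (xi - t1) < d -> Rabs h < d ->
     Rabs (P xi h - P t1 0) < eta) ->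
  (forall h, Rabs h < d0 -> exists xi, Rabs (xi - t1) <= Rabs (v (x1 + h) - t1) /\
     q0 < Rabs (P xi h) /\ P xi h * (v (x1 + h) - t1) + c * h = 0) ->
  q0 < Rabs (P t1 0) ->
  derivable_pt_lim v x1 (- c / P t1 0).
Proof.
  intros Hq0 Hd0 Hv PC Rel HP0 eps Heps.
  set (C := Rabs c + 1). assert (HC : 0 < C) by (unfold C; pose proof (Rabs_pos c); lra).
  destruct (PC (eps * (q0 * q0) / C)) as [d [Hd Pd]].
  { apply Rdiv_lt_0_compat; auto. repeat apply Rmult_lt_0_compat; auto. }
  assert (Hm : 0 < Rmin d0 (Rmin d (d * q0 / C))).
  { repeat apply Rmin_pos; auto. apply Rdiv_lt_0_compat; auto. apply Rmult_lt_0_compat; auto. }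
  exists (mkposreal _ Hm). intros h Hh0 Hh. simpl in Hh.
  pose proof (Rmin_l d0 (Rmin d (d * q0 / C))). pose proof (Rmin_r d0 (Rmin d (d * q0 / C))).
  pose proof (Rmin_l d (d * q0 / C)). pose proof (Rmin_r d (d * q0 / C)).
  destruct (Rel h ltac:(lra)) as [xi [Hxi [HPx HR]]].
  assert (HPn : P xi h <> 0) by (intro Z; rewrite Z, Rabs_R0 in HPx; lra).
  assert (HP0n : P t1 0 <> 0) by (intro Z; rewrite Z, Rabs_R0 in HP0; lra).
  assert (Ev : v (x1 + h) - t1 = - c * h / P xi h) by (field_simplify_eq; auto; lra).
  assert (Hch : forall m, Rabs (c * m) <= C * Rabs m)
    by (intro m; rewrite Rabs_mult; apply Rmult_le_compat_r; [apply Rabs_pos | unfold C; lra]).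
  assert (Bxi : Rabs (xi - t1) < d).
  { eapply Rle_lt_trans; [exact Hxi |]. rewrite Ev.
    apply (Rabs_div_lt _ _ q0); auto. rewrite Ropp_mult_distr_l_reverse, Rabs_Ropp.
    eapply Rle_lt_trans; [apply Hch |].
    replace (d * q0) with (C * (d * q0 / C)) by (field; lra). apply Rmult_lt_compat_l; lra. }
  specialize (Pd xi h Bxi ltac:(lra)).
  rewrite Hv, Ev.
  replace (- c * h / P xi h / h - - c / P t1 0)
    with (c * (P xi h - P t1 0) / (P xi h * P t1 0)) by (field; auto).
  apply (Rabs_div_lt _ _ (q0 * q0)); [nra | rewrite Rabs_mult; nra |].
  eapply Rle_lt_trans; [apply Hch |].
  replace (eps * (q0 * q0)) with (C * (eps * (q0 * q0) / C)) by (field; lra).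
  apply Rmult_lt_compat_l; lra.
Qed.

Lemma continuity_pt_eps f x0 : continuity_pt f x0 -> forall eps, 0 < eps ->
  exists d, 0 < d /\ forall x, Rabs (x - x0) < d -> Rabs (f x - f x0) < eps.
Proof.
  intros H eps He. destruct (H eps He) as [d [Hd P]]. exists d; split; auto.
  intros x Hx. destruct (Req_dec x x0) as [-> | Hne].
  - rewrite Rminus_diag, Rabs_R0; auto.
  - apply (P x). split; [split; [exact I | auto] | exact Hx].
Qed.

Lemma partial_x_of_line g q l :
  derivable_pt_lim (fun s => g (fst q + s * 1, snd q + s * 0)) 0 l -> partial_x g q l.
Proof.
  intro D. unfold partial_x.
  apply derivable_pt_lim_locally_ext with (d := 1)
    (f := fun t => g (fst q + (t - fst q) * 1, snd q + (t - fst q) * 0)); [| lra |].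
  - eapply derivable_pt_lim_value.
    + apply (derivable_pt_lim_comp (fun t => t - fst q)
               (fun s => g (fst q + s * 1, snd q + s * 0))).
      * apply (derivable_pt_lim_minus id (fct_cte (fst q)));
          [apply derivable_pt_lim_id | apply derivable_pt_lim_const].
      * rewrite Rminus_diag. exact D.
    + ring.
  - intros t _. f_equal. f_equal; ring.
Qed.

Lemma partial_y_of_line g q l :
  derivable_pt_lim (fun s => g (fst q + s * 0, snd q + s * 1)) 0 l -> partial_y g q l.
Proof.
  intro D. unfold partial_y.
  apply derivable_pt_lim_locally_ext with (d := 1)
    (f := fun t => g (fst q + (t - snd q) * 0, snd q + (t - snd q) * 1)); [| lra |].
  - eapply derivable_pt_lim_value.
    + apply (derivable_pt_lim_comp (fun t => t - snd q)
               (fun s => g (fst q + s * 0, snd q + s * 1))).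
      * apply (derivable_pt_lim_minus id (fct_cte (snd q)));
          [apply derivable_pt_lim_id | apply derivable_pt_lim_const].
      * rewrite Rminus_diag. exact D.
    + ring.
  - intros t _. f_equal. f_equal; ring.
Qed.

Lemma cont2_at_const c p : cont2_at (fun _ => c) p.
Proof. intros e He; exists 1; split; [lra |]; intros; rewrite Rminus_diag, Rabs_R0; lra. Qed.

Lemma cont2_at_fst p : cont2_at fst p.
Proof. intros e He; exists e; split; auto. Qed.

Lemma cont2_at_snd p : cont2_at snd p.
Proof. intros e He; exists e; split; auto. Qed.

Lemma cont2_at_both f g p e1 e2 : cont2_at f p -> cont2_at g p -> 0 < e1 -> 0 < e2 ->
  exists d, 0 < d /\ forall q, Rabs (fst q - fst p) < d -> Rabs (snd q - snd p) < d ->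
    Rabs (f q - f p) < e1 /\ Rabs (g q - g p) < e2.
Proof.
  intros Hf Hg H1 H2.
  destruct (Hf e1 H1) as [d1 [Hd1 P1]], (Hg e2 H2) as [d2 [Hd2 P2]].
  exists (Rmin d1 d2); split; [apply Rmin_pos; auto |]. intros q Hx Hy.
  split; [apply P1 | apply P2]; eapply Rlt_le_trans; eauto; try apply Rmin_l; apply Rmin_r.
Qed.

Lemma cont2_at_plus f g p :
  cont2_at f p -> cont2_at g p -> cont2_at (fun q => f q + g q) p.
Proof.
  intros Hf Hg e He. destruct (cont2_at_both f g p (e/2) (e/2) Hf Hg) as [d [Hd P]]; try lra.
  exists d; split; auto. intros q Hx Hy. destruct (P q Hx Hy) as [A B].
  replace (f q + g q - (f p + g p)) with ((f q - f p) + (g q - g p)) by ring.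
  eapply Rle_lt_trans; [apply Rabs_triang |]. lra.
Qed.

Lemma cont2_at_mult f g p :
  cont2_at f p -> cont2_at g p -> cont2_at (fun q => f q * g q) p.
Proof.
  intros Hf Hg e He.
  set (M1 := Rabs (f p) + 1). set (M2 := Rabs (g p) + 1).
  assert (HM1 : 0 < M1) by (unfold M1; pose proof (Rabs_pos (f p)); lra).
  assert (HM2 : 0 < M2) by (unfold M2; pose proof (Rabs_pos (g p)); lra).
  destruct (cont2_at_both f g p (e/(2*M2)) (Rmin 1 (e/(2*M1))) Hf Hg) as [d [Hd P]].
  { apply Rdiv_lt_0_compat; lra. }
  { apply Rmin_pos; [lra | apply Rdiv_lt_0_compat; lra]. }
  exists d; split; auto. intros q Hx Hy. destruct (P q Hx Hy) as [A B].
  pose proof (Rmin_l 1 (e/(2*M1))). pose proof (Rmin_r 1 (e/(2*M1))).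
  replace (f q * g q - f p * g p) with ((f q - f p) * g q + f p * (g q - g p)) by ring.
  eapply Rle_lt_trans; [apply Rabs_triang |]. rewrite !Rabs_mult.
  assert (Hg1 : Rabs (g q) <= M2).
  { unfold M2. replace (g q) with (g p + (g q - g p)) by ring.
    eapply Rle_trans; [apply Rabs_triang |]. lra. }
  assert (T1 : Rabs (f q - f p) * Rabs (g q) <= e/(2*M2) * M2).
  { apply Rmult_le_compat; try apply Rabs_pos; lra. }
  assert (T2 : Rabs (f p) * Rabs (g q - g p) < M1 * (e/(2*M1))).
  { apply Rle_lt_trans with (M1 * Rabs (g q - g p)).
    - apply Rmult_le_compat_r; [apply Rabs_pos | unfold M1; lra].
    - apply Rmult_lt_compat_l; lra. }
  assert (E1 : e/(2*M2)*M2 = e/2) by (field; lra).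
  assert (E2 : M1*(e/(2*M1)) = e/2) by (field; lra).
  lra.
Qed.

Lemma cont2_at_inv g p : cont2_at g p -> g p <> 0 -> cont2_at (fun q => / g q) p.
Proof.
  intros Hg Hn e He.
  assert (Ha : 0 < Rabs (g p)) by (apply Rabs_pos_lt; auto).
  set (m := Rmin (Rabs (g p) / 2) (e * Rabs (g p) * Rabs (g p) / 2)).
  destruct (Hg m) as [d [Hd P]].
  { apply Rmin_pos; [lra |]. apply Rdiv_lt_0_compat; [| lra].
    apply Rmult_lt_0_compat; [apply Rmult_lt_0_compat |]; lra. }
  exists d; split; auto. intros q Hx Hy. specialize (P q Hx Hy).
  pose proof (Rmin_l (Rabs (g p) / 2) (e * Rabs (g p) * Rabs (g p) / 2)) as M1.
  pose proof (Rmin_r (Rabs (g p) / 2) (e * Rabs (g p) * Rabs (g p) / 2)) as M2.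
  fold m in M1, M2.
  assert (Hq : Rabs (g p) / 2 <= Rabs (g q)).
  { pose proof (Rabs_triang_inv (g p) (g q)). rewrite <- Rabs_Ropp in P.
    replace (- (g q - g p)) with (g p - g q) in P by ring. lra. }
  assert (Hq0 : g q <> 0) by (intro Z; rewrite Z, Rabs_R0 in Hq; lra).
  replace (/ g q - / g p) with ((g p - g q) * / g q * / g p) by (field; auto).
  rewrite !Rabs_mult, !Rabs_inv, <- Rabs_Ropp.
  replace (- (g p - g q)) with (g q - g p) by ring.
  set (D := Rabs (g q - g p)) in *.
  apply Rle_lt_trans with (D * / (Rabs (g p) / 2) * / Rabs (g p)).
  - apply Rmult_le_compat_r; [left; apply Rinv_0_lt_compat; lra |].
    apply Rmult_le_compat_l; [apply Rabs_pos |]. apply Rinv_le_contravar; lra.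
  - apply Rlt_le_trans with ((e * Rabs (g p) * Rabs (g p) / 2) * / (Rabs (g p) / 2) * / Rabs (g p)).
    + apply Rmult_lt_compat_r; [apply Rinv_0_lt_compat; lra |].
      apply Rmult_lt_compat_r; [apply Rinv_0_lt_compat; lra | lra].
    + right; field; lra.
Qed.

Lemma cont2_at_comp f h p :
  continuity_pt f (h p) -> cont2_at h p -> cont2_at (fun q => f (h q)) p.
Proof.
  intros Hf Hh e He. destruct (continuity_pt_eps f (h p) Hf e He) as [d1 [Hd1 P1]].
  destruct (Hh d1 Hd1) as [d [Hd P]]. exists d; split; auto.
Qed.

Lemma cont2_at_neq0_nbhd h q : cont2_at h q -> h q <> 0 -> exists e, 0 < e /\
  forall q', Rabs (fst q' - fst q) < e -> Rabs (snd q' - snd q) < e -> h q' <> 0.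
Proof.
  intros C Hn. destruct (C (Rabs (h q))) as [e [He P]]; [apply Rabs_pos_lt; auto |].
  exists e; split; auto. intros q' H1 H2 Z. specialize (P q' H1 H2). rewrite Z in P.
  replace (0 - h q) with (- h q) in P by ring. rewrite Rabs_Ropp in P. lra.
Qed.

Definition box (c1 c2 d : R) (q : pt) := Rabs (fst q - c1) < d /\ Rabs (snd q - c2) < d.

Lemma cont2_at_preimage_box c1 c2 d h1 h2 q : cont2_at h1 q -> cont2_at h2 q ->
  box c1 c2 d (h1 q, h2 q) -> exists e, 0 < e /\ forall q',
  Rabs (fst q' - fst q) < e -> Rabs (snd q' - snd q) < e -> box c1 c2 d (h1 q', h2 q').
Proof.
  intros C1 C2 [B1 B2]. simpl in B1, B2.
  destruct (cont2_at_both h1 h2 q (d - Rabs (h1 q - c1)) (d - Rabs (h2 q - c2)) C1 C2)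
    as [e [He P]]; try lra.
  exists e; split; auto. intros q' H1 H2. destruct (P q' H1 H2) as [P1 P2]. split; simpl.
  - replace (h1 q' - c1) with ((h1 q' - h1 q) + (h1 q - c1)) by ring.
    eapply Rle_lt_trans; [apply Rabs_triang |]. lra.
  - replace (h2 q' - c2) with ((h2 q' - h2 q) + (h2 q - c2)) by ring.
    eapply Rle_lt_trans; [apply Rabs_triang |]. lra.
Qed.

Lemma box_nbhd c1 c2 d q : box c1 c2 d q -> exists e, 0 < e /\ forall q',
  Rabs (fst q' - fst q) < e -> Rabs (snd q' - snd q) < e -> box c1 c2 d q'.
Proof.
  destruct q as [x y]. apply (cont2_at_preimage_box c1 c2 d fst snd (x, y)).
  - apply cont2_at_fst.
  - apply cont2_at_snd.
Qed.

Lemma open2_box c1 c2 d : open2 (box c1 c2 d).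
Proof. intros q Hq. now apply box_nbhd. Qed.

Lemma open2_full : open2 (fun _ => True).
Proof. intros p _; exists 1; split; auto; lra. Qed.

(** * Smoothness of rational expressions in smooth atoms *)

(* [smooth2] asks for all iterated partials at once; it is established here for
   rational expressions in x, y and "atoms" whose first partials are again such
   expressions, by differentiating the expressions symbolically. *)
Inductive expr : Type :=
| EConst : R -> expr
| EX : expr
| EY : expr
| EAdd : expr -> expr -> expr
| EMul : expr -> expr -> expr
| EInv : expr -> expr
| EAtom : nat -> nat -> expr.

Record atoms := Atoms {
  atom : nat -> nat -> pt -> R;
  atom_dx : nat -> nat -> expr;
  atom_dy : nat -> nat -> expr }.

Section Expressions.

Variable A : atoms.

Fixpoint eval (e : expr) (q : pt) : R :=
  match e with
  | EConst c => c
  | EX => fst q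
  | EY => snd q
  | EAdd e1 e2 => eval e1 q + eval e2 q
  | EMul e1 e2 => eval e1 q * eval e2 q
  | EInv e1 => / eval e1 q
  | EAtom i k => atom A i k q
  end.

Fixpoint diff_x (e : expr) : expr :=
  match e with
  | EConst _ | EY => EConst 0
  | EX => EConst 1
  | EAdd e1 e2 => EAdd (diff_x e1) (diff_x e2)
  | EMul e1 e2 => EAdd (EMul (diff_x e1) e2) (EMul e1 (diff_x e2))
  | EInv e1 => EMul (EMul (EConst (-1)) (diff_x e1)) (EMul (EInv e1) (EInv e1))
  | EAtom i k => atom_dx A i k
  end.

Fixpoint diff_y (e : expr) : expr :=
  match e with
  | EConst _ | EX => EConst 0
  | EY => EConst 1
  | EAdd e1 e2 => EAdd (diff_y e1) (diff_y e2)
  | EMul e1 e2 => EAdd (EMul (diff_y e1) e2) (EMul e1 (diff_y e2))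
  | EInv e1 => EMul (EMul (EConst (-1)) (diff_y e1)) (EMul (EInv e1) (EInv e1))
  | EAtom i k => atom_dy A i k
  end.

Fixpoint defined_at (e : expr) (q : pt) : Prop :=
  match e with
  | EAdd e1 e2 | EMul e1 e2 => defined_at e1 q /\ defined_at e2 q
  | EInv e1 => eval e1 q <> 0 /\ defined_at e1 q
  | _ => True
  end.

Definition defined_on (S : pt -> Prop) (e : expr) := forall q, S q -> defined_at e q.

Definition atoms_smooth_on (S : pt -> Prop) : Prop :=
  open2 S /\
  (forall i k q, S q -> partial_x (atom A i k) q (eval (atom_dx A i k) q)) /\
  (forall i k q, S q -> partial_y (atom A i k) q (eval (atom_dy A i k) q)) /\
  (forall i k q, S q -> cont2_at (atom A i k) q) /\
  (forall i k, defined_on S (atom_dx A i k) /\ defined_on S (atom_dy A i k)) /\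
  (forall i k q, S q -> eval (diff_y (atom_dx A i k)) q = eval (diff_x (atom_dy A i k)) q).

Lemma partial_x_eval e x y :
  (forall i k, partial_x (atom A i k) (x, y) (eval (atom_dx A i k) (x, y))) ->
  defined_at e (x, y) -> partial_x (eval e) (x, y) (eval (diff_x e) (x, y)).
Proof.
  intros Ha; unfold partial_x in *; simpl in *; induction e; simpl; intro Ho.
  - apply derivable_pt_lim_const.
  - apply derivable_pt_lim_id.
  - apply derivable_pt_lim_const.
  - destruct Ho. apply (derivable_pt_lim_plus (fun t => eval e1 (t, y)) (fun t => eval e2 (t, y))); auto.
  - destruct Ho. apply (derivable_pt_lim_mult (fun t => eval e1 (t, y)) (fun t => eval e2 (t, y))); auto.
  - destruct Ho. apply (derivable_pt_lim_inv (fun t => eval e (t, y))); auto.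
  - apply Ha.
Qed.

Lemma partial_y_eval e x y :
  (forall i k, partial_y (atom A i k) (x, y) (eval (atom_dy A i k) (x, y))) ->
  defined_at e (x, y) -> partial_y (eval e) (x, y) (eval (diff_y e) (x, y)).
Proof.
  intros Ha; unfold partial_y in *; simpl in *; induction e; simpl; intro Ho.
  - apply derivable_pt_lim_const.
  - apply derivable_pt_lim_const.
  - apply derivable_pt_lim_id.
  - destruct Ho. apply (derivable_pt_lim_plus (fun t => eval e1 (x, t)) (fun t => eval e2 (x, t))); auto.
  - destruct Ho. apply (derivable_pt_lim_mult (fun t => eval e1 (x, t)) (fun t => eval e2 (x, t))); auto.
  - destruct Ho. apply (derivable_pt_lim_inv (fun t => eval e (x, t))); auto.
  - apply Ha.
Qed.

Lemma cont2_at_eval e q :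
  (forall i k, cont2_at (atom A i k) q) -> defined_at e q -> cont2_at (eval e) q.
Proof.
  intros Ha; induction e; simpl; intro Ho.
  - apply cont2_at_const.
  - apply cont2_at_fst.
  - apply cont2_at_snd.
  - destruct Ho; apply (cont2_at_plus (eval e1) (eval e2)); auto.
  - destruct Ho; apply (cont2_at_mult (eval e1) (eval e2)); auto.
  - destruct Ho; apply (cont2_at_inv (eval e)); auto.
  - apply Ha.
Qed.

Lemma eval_diff_xy e q :
  (forall i k, eval (diff_y (atom_dx A i k)) q = eval (diff_x (atom_dy A i k)) q) ->
  eval (diff_y (diff_x e)) q = eval (diff_x (diff_y e)) q.
Proof.
  intros Ha; induction e; simpl; try rewrite IHe1, IHe2; try rewrite IHe; try ring.
  apply Ha.
Qed.

Variable S : pt -> Prop.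
Hypothesis HA : atoms_smooth_on S.

Lemma defined_on_diff_x e : defined_on S e -> defined_on S (diff_x e).
Proof.
  intros H q Hq. specialize (H q Hq).
  induction e; simpl in *; try tauto. apply HA; auto.
Qed.

Lemma defined_on_diff_y e : defined_on S e -> defined_on S (diff_y e).
Proof.
  intros H q Hq. specialize (H q Hq).
  induction e; simpl in *; try tauto. apply HA; auto.
Qed.

Lemma defined_on_iter_diff e i j :
  defined_on S e -> defined_on S (Nat.iter j diff_y (Nat.iter i diff_x e)).
Proof.
  intro H. induction j; simpl; [induction i; simpl; auto | ].
  - now apply defined_on_diff_x.
  - now apply defined_on_diff_y.
Qed.

Lemma cont2_at_eval_on e q : defined_on S e -> S q -> cont2_at (eval e) q.
Proof. intros O Hq. apply cont2_at_eval; auto. intros; apply HA; auto. Qed.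

Lemma eval_diff_y_ext e1 e2 : defined_on S e1 -> defined_on S e2 ->
  (forall q, S q -> eval e1 q = eval e2 q) ->
  forall q, S q -> eval (diff_y e1) q = eval (diff_y e2) q.
Proof.
  intros O1 O2 E [x y] Hq. destruct HA as [Op [_ [Hy _]]].
  pose proof (partial_y_eval e1 x y (fun i k => Hy i k _ Hq) (O1 _ Hq)) as D1.
  pose proof (partial_y_eval e2 x y (fun i k => Hy i k _ Hq) (O2 _ Hq)) as D2.
  destruct (Op _ Hq) as [d [Hd Pd]]. unfold partial_y in *; simpl in *.
  apply (uniqueness_limite (fun t => eval e2 (x, t)) y); auto.
  apply derivable_pt_lim_locally_ext with (2 := Hd) (1 := D1).
  intros t Ht. apply E, Pd; simpl; auto. rewrite Rminus_diag, Rabs_R0; lra.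
Qed.

Lemma eval_diff_x_iter_y e j : defined_on S e -> forall q, S q ->
  eval (diff_x (Nat.iter j diff_y e)) q = eval (Nat.iter j diff_y (diff_x e)) q.
Proof.
  intros O. induction j; intros q Hq; simpl; auto.
  rewrite <- eval_diff_xy by (intros; apply HA; auto).
  apply eval_diff_y_ext; auto.
  - apply defined_on_diff_x. exact (defined_on_iter_diff e 0 j O).
  - exact (defined_on_iter_diff e 1 j O).
Qed.

Lemma smooth2_eval e : defined_on S e -> smooth2 S (eval e).
Proof.
  intro O. exists (fun i j => eval (Nat.iter j diff_y (Nat.iter i diff_x e))).
  split; [reflexivity |]. intros i j [x y] Hq.
  pose proof (defined_on_iter_diff e i j O _ Hq) as Oij.
  split; [| split].
  - eapply derivable_pt_lim_value.
    + exact (partial_x_eval _ x y (fun i k => proj1 (proj2 HA) i k _ Hq) Oij).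
    + apply eval_diff_x_iter_y; auto. exact (defined_on_iter_diff e i 0 O).
  - exact (partial_y_eval _ x y (fun i k => proj1 (proj2 (proj2 HA)) i k _ Hq) Oij).
  - apply cont2_at_eval_on; auto. exact (defined_on_iter_diff e i j O).
Qed.

End Expressions.

(** * The linearizing map *)

Definition derivative_tower (D : nat -> R -> R) : Prop :=
  forall n x, derivable_pt_lim (D n) x (D (S n) x).

Lemma derivative_tower_continuity D k x : derivative_tower D -> continuity_pt (D k) x.
Proof. intro T. apply derivable_continuous_pt. exact (exist _ _ (T k x)). Qed.

Section Web.

Variables Da Db : nat -> R -> R.
Hypotheses (Ta : derivative_tower Da) (Tb : derivative_tower Db).

(* Atoms [EAtom 0 k] and [EAtom 1 k] are a^(k)(x) and b^(k)(x). *)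
Definition source_atoms : atoms :=
  Atoms (fun i k q => match i with O => Da k (fst q) | _ => Db k (fst q) end)
        (fun i k => EAtom i (S k)) (fun _ _ => EConst 0).

Lemma source_atoms_smooth S : open2 S -> atoms_smooth_on source_atoms S.
Proof.
  intro Op. split; [exact Op |]. split; [| split; [| split; [| split]]].
  - intros i k [x y] _. unfold partial_x; destruct i; simpl; auto.
  - intros i k [x y] _. unfold partial_y; destruct i; simpl; apply derivable_pt_lim_const.
  - intros i k q _. destruct i; apply cont2_at_comp;
      auto using derivative_tower_continuity, cont2_at_fst.
  - intros i k; split; intros q _; exact I.
  - reflexivity.
Qed.

Variable K : R.

Definition web_F (q : pt) : R := fab (Da O) (Db O) q + K.

Definition web_F_expr : expr :=
  EAdd (EAdd (EMul (EAtom 0 0) EX) (EMul (EAtom 1 0) EY)) (EConst K).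

(* A projective transformation: it maps the lines [y = c] into lines through the origin,
   the level curves [web_F = c] into the vertical lines [u = 1/c], and each line [x = c],
   along which [web_F] is affine in [y], into a line. *)
Definition linearize (q : pt) : pt := (/ web_F q, snd q / web_F q).

Lemma linearize_vertical_lines V : (forall q, V q -> web_F q <> 0) ->
  leaves_to_lines V linearize fst.
Proof.
  intros HV c. destruct (classic (Da O c * c + K = 0 /\ Db O c = 0)) as [[Z1 Z2] | NZ].
  - exists 1, 0, 0. split; [left; lra |]. intros [x y] Vq Ec. simpl in Ec; subst x.
    exfalso. apply (HV _ Vq). unfold web_F, fab; simpl. rewrite Z2. lra.
  - exists (Da O c * c + K), (Db O c), 1. split; [now apply not_and_or |].
    intros [x y] Vq Ec. simpl in Ec; subst x. pose proof (HV _ Vq) as Hn.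
    unfold linearize, web_F, fab in *; simpl in *. field; exact Hn.
Qed.

Lemma linearize_horizontal_lines V : leaves_to_lines V linearize snd.
Proof.
  intro c. exists c, (-1), 0. split; [right; lra |].
  intros [x y] _ Ec. simpl in Ec; subst y. unfold linearize; simpl. unfold Rdiv. ring.
Qed.

Lemma linearize_web_lines V : leaves_to_lines V linearize (fab (Da O) (Db O)).
Proof.
  intro c. exists 1, 0, (/ (c + K)). split; [left; lra |].
  intros q _ Ec. unfold linearize, web_F; simpl. rewrite Ec. ring.
Qed.

Lemma smooth2_linearize V : open2 V -> (forall q, V q -> web_F q <> 0) ->
  smooth2 V (fun q => fst (linearize q)) /\ smooth2 V (fun q => snd (linearize q)).
Proof.
  intros Op HV. pose proof (source_atoms_smooth V Op) as HA.
  split.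
  - apply (smooth2_eval source_atoms V HA (EInv web_F_expr)).
    intros q Vq. split; [exact (HV q Vq) | simpl; tauto].
  - apply (smooth2_eval source_atoms V HA (EMul EY (EInv web_F_expr))).
    intros q Vq. split; [exact I | split; [exact (HV q Vq) | simpl; tauto]].
Qed.

Lemma cont2_at_linearize q : web_F q <> 0 ->
  cont2_at (fun q => fst (linearize q)) q /\ cont2_at (fun q => snd (linearize q)) q.
Proof.
  intro Hq. pose proof (source_atoms_smooth _ open2_full) as HA.
  split.
  - apply (cont2_at_eval source_atoms (EInv web_F_expr)); [intros; apply HA; exact I |].
    split; [exact Hq | simpl; tauto].
  - apply (cont2_at_eval source_atoms (EMul EY (EInv web_F_expr))); [intros; apply HA; exact I |].
    split; [exact I | split; [exact Hq | simpl; tauto]].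
Qed.

Lemma cont2_at_web_F q : cont2_at web_F q.
Proof.
  apply (cont2_at_eval source_atoms web_F_expr); [| simpl; tauto].
  intros; apply (source_atoms_smooth _ open2_full); exact I.
Qed.

(* [linearize (x, y) = (X, Y)] exactly when [level x X Y = 0] and [Y = y X]. *)
Definition level (t X Y : R) : R := (Da O t * t + K) * X + Db O t * Y - 1.

Definition level_dt (t X Y : R) : R := (Da 1 t * t + Da O t) * X + Db 1 t * Y.

Lemma level_linearize q : web_F q <> 0 ->
  level (fst q) (fst (linearize q)) (snd (linearize q)) = 0.
Proof. intro Hq. unfold level, linearize, web_F, fab in *; simpl. field; exact Hq. Qed.

Lemma level_sub t X Y X1 Y1 :
  level t X Y - level t X1 Y1 = (Da O t * t + K) * (X - X1) + Db O t * (Y - Y1).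
Proof. unfold level; ring. Qed.

Lemma derivable_level X Y t : derivable_pt_lim (fun t => level t X Y) t (level_dt t X Y).
Proof.
  set (e := EAdd (EAdd (EMul (EAdd (EMul (EAtom 0 0) EX) (EConst K)) (EConst X))
                       (EMul (EAtom 1 0) (EConst Y))) (EConst (-1))).
  pose proof (source_atoms_smooth _ open2_full) as HA.
  pose proof (partial_x_eval source_atoms e t 0 (fun i k => proj1 (proj2 HA) i k _ I)) as D.
  unfold partial_x in D; simpl in D.
  apply derivable_pt_lim_locally_ext with (d := 1) (f := fun t => eval source_atoms e (t, 0)).
  - eapply derivable_pt_lim_value; [apply D; tauto | unfold level_dt; simpl; ring].
  - lra.
  - intros s _. unfold level; simpl; ring.
Qed.

Lemma level_mvt X Y s t : exists xi, Rmin s t <= xi <= Rmax s t /\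
  level s X Y - level t X Y = level_dt xi X Y * (s - t).
Proof.
  destruct (Rtotal_order s t) as [Hl | [He | Hg]].
  - destruct (MVT_cor2 (fun t => level t X Y) (fun t => level_dt t X Y) s t Hl)
      as [c [Hc Hc']]; [intros; apply derivable_level |].
    exists c. rewrite Rmin_left, Rmax_right by lra. split; [lra |].
    replace (level s X Y - level t X Y) with (- (level t X Y - level s X Y)) by ring.
    rewrite Hc; ring.
  - subst. exists t. rewrite Rmin_left, Rmax_left by lra. split; [lra | ring].
  - destruct (MVT_cor2 (fun t => level t X Y) (fun t => level_dt t X Y) t s Hg)
      as [c [Hc Hc']]; [intros; apply derivable_level |].
    exists c. rewrite Rmin_right, Rmax_left by lra. split; [lra | exact Hc].
Qed.

Lemma level_continuity X Y : continuity (fun t => level t X Y).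
Proof. intro t. apply derivable_continuous_pt. exact (exist _ _ (derivable_level X Y t)). Qed.

Lemma level_dt_continuous t1 X1 Y1 eps : 0 < eps -> exists d, 0 < d /\
  forall t X Y, Rabs (t - t1) < d -> Rabs (X - X1) < d -> Rabs (Y - Y1) < d ->
    Rabs (level_dt t X Y - level_dt t1 X1 Y1) < eps.
Proof.
  intro He. pose proof (source_atoms_smooth _ open2_full) as HA.
  set (E1 := EMul (EAdd (EMul (EAtom 0 1) EX) (EAtom 0 0)) EY).
  set (E2 := EMul (EAtom 1 1) EY).
  assert (C1 : cont2_at (eval source_atoms E1) (t1, X1))
    by (apply (cont2_at_eval_on _ _ HA); [intros q _; simpl; tauto | exact I]).
  assert (C2 : cont2_at (eval source_atoms E2) (t1, Y1))
    by (apply (cont2_at_eval_on _ _ HA); [intros q _; simpl; tauto | exact I]).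
  destruct (C1 (eps/2)) as [d1 [Hd1 P1]]; [lra |].
  destruct (C2 (eps/2)) as [d2 [Hd2 P2]]; [lra |].
  exists (Rmin d1 d2); split; [apply Rmin_pos; auto |]. intros t X Y Ht HX HY.
  pose proof (Rmin_l d1 d2); pose proof (Rmin_r d1 d2).
  specialize (P1 (t, X)); specialize (P2 (t, Y)); simpl in P1, P2.
  assert (A1 := P1 ltac:(lra) ltac:(lra)). assert (A2 := P2 ltac:(lra) ltac:(lra)).
  unfold level_dt.
  match goal with |- Rabs ?l < _ =>
    replace l with (((Da 1%nat t * t + Da O t) * X - (Da 1%nat t1 * t1 + Da O t1) * X1)
                    + (Db 1%nat t * Y - Db 1%nat t1 * Y1)) by ring end.
  eapply Rle_lt_trans; [apply Rabs_triang |]. lra.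
Qed.

Section RootAtoms.

Variable g : pt -> R.

(* Atoms [EAtom 0 k] and [EAtom 1 k] are a^(k)(g) and b^(k)(g); atom [2] is [g] itself,
   with the partials given by implicit differentiation of [level (g q) X Y = 0]. *)
Definition level_dt_expr : expr :=
  EAdd (EMul (EAdd (EMul (EAtom 0 1) (EAtom 2 0)) (EAtom 0 0)) EX) (EMul (EAtom 1 1) EY).
Definition root_dx_expr : expr :=
  EMul (EMul (EConst (-1)) (EAdd (EMul (EAtom 0 0) (EAtom 2 0)) (EConst K))) (EInv level_dt_expr).
Definition root_dy_expr : expr :=
  EMul (EMul (EConst (-1)) (EAtom 1 0)) (EInv level_dt_expr).

Definition root_atoms : atoms :=
  Atoms (fun i k q => match i with O => Da k (g q) | 1%nat => Db k (g q) | _ => g q end)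
        (fun i k => match i with
                    | O => EMul (EAtom 0 (S k)) root_dx_expr
                    | 1%nat => EMul (EAtom 1 (S k)) root_dx_expr
                    | _ => root_dx_expr end)
        (fun i k => match i with
                    | O => EMul (EAtom 0 (S k)) root_dy_expr
                    | 1%nat => EMul (EAtom 1 (S k)) root_dy_expr
                    | _ => root_dy_expr end).

Lemma root_atoms_smooth W : open2 W ->
  (forall q, W q -> level_dt (g q) (fst q) (snd q) <> 0) ->
  (forall q, W q -> partial_x g q (- (Da O (g q) * g q + K) / level_dt (g q) (fst q) (snd q))) ->
  (forall q, W q -> partial_y g q (- Db O (g q) / level_dt (g q) (fst q) (snd q))) ->
  (forall q, W q -> cont2_at g q) ->
  atoms_smooth_on root_atoms W.
Proof.
  intros Op Qn Px Py Cg.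
  assert (Gx : forall q, W q -> partial_x g q (eval root_atoms root_dx_expr q)).
  { intros q Wq. eapply derivable_pt_lim_value; [apply Px; exact Wq |].
    simpl. unfold level_dt, Rdiv. ring. }
  assert (Gy : forall q, W q -> partial_y g q (eval root_atoms root_dy_expr q)).
  { intros q Wq. eapply derivable_pt_lim_value; [apply Py; exact Wq |].
    simpl. unfold level_dt, Rdiv. ring. }
  split; [exact Op |]. split; [| split; [| split; [| split]]].
  - intros i k [x y] Wq. specialize (Gx _ Wq). unfold partial_x in *.
    destruct i as [| [| i]]; simpl; try exact Gx.
    + apply (derivable_pt_lim_comp (fun t => g (t, y)) (Da k)); auto.
    + apply (derivable_pt_lim_comp (fun t => g (t, y)) (Db k)); auto.
  - intros i k [x y] Wq. specialize (Gy _ Wq). unfold partial_y in *.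
    destruct i as [| [| i]]; simpl; try exact Gy.
    + apply (derivable_pt_lim_comp (fun t => g (x, t)) (Da k)); auto.
    + apply (derivable_pt_lim_comp (fun t => g (x, t)) (Db k)); auto.
  - intros i k q Wq. destruct i as [| [| i]]; simpl; auto;
      apply cont2_at_comp; auto using derivative_tower_continuity.
  - intros i k. split; intros q Wq; pose proof (Qn q Wq);
      destruct i as [| [| i]]; simpl in *; tauto.
  - intros i k q Wq.
    assert (C : eval root_atoms (diff_y root_atoms root_dx_expr) q
                = eval root_atoms (diff_x root_atoms root_dy_expr) q)
      by (pose proof (Qn q Wq); simpl in *; field; auto).
    destruct i as [| [| i]]; try exact C; simpl atom_dx; simpl atom_dy;
    change (diff_y ?A (EMul ?a ?b)) with (EAdd (EMul (diff_y A a) b) (EMul a (diff_y A b)));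
    change (diff_x ?A (EMul ?a ?b)) with (EAdd (EMul (diff_x A a) b) (EMul a (diff_x A b)));
    change (eval ?A (EAdd ?a ?b) ?q) with (eval A a q + eval A b q);
    change (eval ?A (EMul ?a ?b) ?q) with (eval A a q * eval A b q);
    rewrite C; simpl; ring.
Qed.

End RootAtoms.

(** * Solving the level equation for [t] *)

Section ImplicitFunction.

Variables x0 y0 r : R.
Hypotheses (Hr : 0 < r) (level0 : level x0 1 y0 = 0) (Q0_neq0 : level_dt x0 1 y0 <> 0).
Hypothesis level_dt_close : forall t X Y,
  Rabs (t - x0) < r -> Rabs (X - 1) < r -> Rabs (Y - y0) < r ->
  Rabs (level_dt t X Y - level_dt x0 1 y0) < Rabs (level_dt x0 1 y0) / 2.

Lemma level_dt_bounds t X Y :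
  Rabs (t - x0) < r -> Rabs (X - 1) < r -> Rabs (Y - y0) < r ->
  Rabs (level_dt x0 1 y0) / 2 < Rabs (level_dt t X Y) /\
  level_dt x0 1 y0 * level_dt x0 1 y0 / 2 < level_dt x0 1 y0 * level_dt t X Y.
Proof. intros; now apply Rabs_close_half, level_dt_close. Qed.

Lemma level_root_unique X Y s t : Rabs (X - 1) < r -> Rabs (Y - y0) < r ->
  Rabs (s - x0) < r -> Rabs (t - x0) < r -> level s X Y = 0 -> level t X Y = 0 -> s = t.
Proof.
  intros HX HY Hs Ht Es Et. destruct (level_mvt X Y s t) as [xi [Bx E]].
  destruct (Rabs_between _ _ _ _ _ Bx Hs Ht) as [Bxi _].
  destruct (level_dt_bounds xi X Y Bxi HX HY) as [Hbig _].
  rewrite Es, Et in E. destruct (Rmult_integral (level_dt xi X Y) (s - t)) as [Z | Z]; [lra | | lra].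
  rewrite Z, Rabs_R0 in Hbig. pose proof (Rabs_pos (level_dt x0 1 y0)). lra.
Qed.

Lemma level_sign_change :
  let Q0 := level_dt x0 1 y0 in
  Q0 * level (x0 - r/2) 1 y0 < - (Q0 * Q0 / 2 * (r/2)) /\
  Q0 * Q0 / 2 * (r/2) < Q0 * level (x0 + r/2) 1 y0.
Proof.
  intro Q0.
  assert (Hmvt : forall s, Rabs (s - x0) < r ->
            exists m, Q0 * Q0 / 2 < m /\ Q0 * level s 1 y0 = m * (s - x0)).
  { intros s Hs. destruct (level_mvt 1 y0 s x0) as [xi [Bx E]].
    destruct (Rabs_between s x0 xi x0 r Bx Hs) as [Bxi _]; [split_Rabs; lra |].
    exists (Q0 * level_dt xi 1 y0). split.
    - apply level_dt_bounds; auto; split_Rabs; lra.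
    - rewrite level0, Rminus_0_r in E. rewrite E. unfold Q0; ring. }
  destruct (Hmvt (x0 - r/2)) as [mL [HL EL]]; [split_Rabs; lra |].
  destruct (Hmvt (x0 + r/2)) as [mR [HR ER]]; [split_Rabs; lra |].
  rewrite EL, ER.
  replace (x0 - r/2 - x0) with (- (r/2)) by ring. replace (x0 + r/2 - x0) with (r/2) by ring.
  assert (0 < r/2) by lra. split; nra.
Qed.

Lemma level_sign_change_near : exists d, 0 < d /\ forall X Y,
  Rabs (X - 1) < d -> Rabs (Y - y0) < d ->
  level_dt x0 1 y0 * level (x0 - r/2) X Y < 0 < level_dt x0 1 y0 * level (x0 + r/2) X Y.
Proof.
  destruct level_sign_change as [SL SR].
  set (Q0 := level_dt x0 1 y0) in *. set (c := Q0 * Q0 / 2 * (r / 2)) in *.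
  assert (Hc : 0 < c) by (unfold c; pose proof (Rsqr_pos_lt _ Q0_neq0); unfold Rsqr in *; nra).
  set (B := fun t => Rabs (Da O t * t + K) + Rabs (Db O t)).
  set (M := B (x0 - r/2) + B (x0 + r/2)).
  assert (HB : forall t, 0 <= B t)
    by (intro t; unfold B; pose proof (Rabs_pos (Da O t * t + K)); pose proof (Rabs_pos (Db O t)); lra).
  assert (HM : 0 <= Rabs Q0 * M)
    by (apply Rmult_le_pos; [apply Rabs_pos | unfold M; pose proof (HB (x0 - r/2)); pose proof (HB (x0 + r/2)); lra]).
  set (d := c / (Rabs Q0 * M + 1)).
  assert (Hd : 0 < d) by (apply Rdiv_lt_0_compat; lra).
  exists d. split; [exact Hd |]. intros X Y HX HY.
  assert (Pert : forall t, B t <= M -> Rabs (Q0 * level t X Y - Q0 * level t 1 y0) < c).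
  { intros t Ht. rewrite <- Rmult_minus_distr_l, Rabs_mult, level_sub.
    apply Rle_lt_trans with (Rabs Q0 * (M * d)).
    - apply Rmult_le_compat_l; [apply Rabs_pos |].
      eapply Rle_trans; [apply (Rabs_lin_comb_le _ _ _ _ _ _ d HX HY) |].
      apply Rmult_le_compat_r; [lra | exact Ht].
    - replace (Rabs Q0 * (M * d)) with (c - d) by (unfold d; field; lra). lra. }
  assert (PL := Pert (x0 - r/2) ltac:(unfold M; pose proof (HB (x0 + r/2)); lra)).
  assert (PR := Pert (x0 + r/2) ltac:(unfold M; pose proof (HB (x0 - r/2)); lra)).
  split.
  - pose proof (Rle_abs (Q0 * level (x0 - r/2) X Y - Q0 * level (x0 - r/2) 1 y0)). lra.
  - rewrite Rabs_minus_sym in PR.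
    pose proof (Rle_abs (Q0 * level (x0 + r/2) 1 y0 - Q0 * level (x0 + r/2) X Y)). lra.
Qed.

Lemma level_root_exists : exists d, 0 < d /\ 2 * d * (1 + Rabs y0) < r /\
  forall X Y, box 1 y0 d (X, Y) -> exists t, Rabs (t - x0) < r /\ level t X Y = 0.
Proof.
  destruct level_sign_change_near as [d0 [Hd0 Hsign]].
  assert (Hy : 1 <= 1 + Rabs y0) by (pose proof (Rabs_pos y0); lra).
  set (d := Rmin d0 (r / (4 * (1 + Rabs y0)))).
  assert (Hd1 : d <= d0) by apply Rmin_l.
  assert (Hd2 : d <= r / (4 * (1 + Rabs y0))) by apply Rmin_r.
  exists d. split; [apply Rmin_pos; [lra | apply Rdiv_lt_0_compat; lra] |]. split.
  - apply Rle_lt_trans with (2 * (r / (4 * (1 + Rabs y0))) * (1 + Rabs y0)).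
    + apply Rmult_le_compat_r; lra.
    + replace (2 * (r / (4 * (1 + Rabs y0))) * (1 + Rabs y0)) with (r / 2) by (field; lra). lra.
  - intros X Y [B1 B2]; simpl in B1, B2.
    destruct (Hsign X Y) as [EL ER]; [lra | lra |].
    destruct (IVT (mult_real_fct (level_dt x0 1 y0) (fun t => level t X Y)) (x0 - r/2) (x0 + r/2))
      as [z [Hz Ez]]; auto using continuity_scal, level_continuity; [lra |].
    exists z. unfold mult_real_fct in Ez. split.
    + split_Rabs; lra.
    + destruct (Rmult_integral _ _ Ez); [contradiction | assumption].
Qed.

Definition implicit_root (q : pt) : R :=
  epsilon (inhabits 0) (fun t => Rabs (t - x0) < r /\ level t (fst q) (snd q) = 0).

Lemma implicit_root_spec q : (exists t, Rabs (t - x0) < r /\ level t (fst q) (snd q) = 0) ->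
  Rabs (implicit_root q - x0) < r /\ level (implicit_root q) (fst q) (snd q) = 0.
Proof. exact (epsilon_spec _ _). Qed.

Definition root_solves (q : pt) : Prop :=
  Rabs (fst q - 1) < r /\ Rabs (snd q - y0) < r /\
  Rabs (implicit_root q - x0) < r /\ level (implicit_root q) (fst q) (snd q) = 0.

Lemma implicit_root_increment q1 q : root_solves q1 -> root_solves q -> exists xi,
  Rabs (xi - implicit_root q1) <= Rabs (implicit_root q - implicit_root q1) /\
  Rabs (level_dt x0 1 y0) / 2 < Rabs (level_dt xi (fst q) (snd q)) /\
  level_dt xi (fst q) (snd q) * (implicit_root q - implicit_root q1)
  + ((Da O (implicit_root q1) * implicit_root q1 + K) * (fst q - fst q1)
     + Db O (implicit_root q1) * (snd q - snd q1)) = 0.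
Proof.
  intros [_ [_ [R1 E1]]] [X2 [Y2 [R2 E2]]].
  destruct (level_mvt (fst q) (snd q) (implicit_root q) (implicit_root q1)) as [xi [Bx E]].
  destruct (Rabs_between _ _ _ _ _ Bx R2 R1) as [Bxi Bxi'].
  exists xi. split; [exact Bxi' |]. split; [apply level_dt_bounds; auto |].
  pose proof (level_sub (implicit_root q1) (fst q) (snd q) (fst q1) (snd q1)) as Df.
  rewrite E1 in Df. rewrite E2 in E. lra.
Qed.

Variable W : pt -> Prop.
Hypotheses (W_open : open2 W) (W_solves : forall q, W q -> root_solves q).

Lemma implicit_root_level_dt_neq0 q : W q ->
  level_dt (implicit_root q) (fst q) (snd q) <> 0.
Proof.
  intros Wq. destruct (W_solves q Wq) as [HX [HY [R1 _]]].
  destruct (level_dt_bounds _ _ _ R1 HX HY) as [Hbig _].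
  intro Z; rewrite Z, Rabs_R0 in Hbig. pose proof (Rabs_pos (level_dt x0 1 y0)). lra.
Qed.

Lemma implicit_root_line_derivative q1 u v : W q1 ->
  let g1 := implicit_root q1 in
  derivable_pt_lim (fun s => implicit_root (fst q1 + s * u, snd q1 + s * v)) 0
    (- ((Da O g1 * g1 + K) * u + Db O g1 * v) / level_dt g1 (fst q1) (snd q1)).
Proof.
  intros Wq1 g1. destruct q1 as [X1 Y1].
  destruct (W_open _ Wq1) as [eb [Heb Pb]]. simpl in *.
  pose proof (W_solves _ Wq1) as S1. destruct S1 as [Bx1 [By1 [R1 _]]]; simpl in *.
  set (N := Rabs u + Rabs v + 1).
  assert (HN : 0 < N) by (unfold N; pose proof (Rabs_pos u); pose proof (Rabs_pos v); lra).
  assert (Hq0 : 0 < Rabs (level_dt x0 1 y0) / 2)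
    by (pose proof (Rabs_pos_lt _ Q0_neq0); lra).
  eapply derivable_pt_lim_value.
  - apply (derivable_pt_lim_implicit _ 0 g1 ((Da O g1 * g1 + K) * u + Db O g1 * v) _ (eb / N)
             (fun xi h => level_dt xi (X1 + h * u) (Y1 + h * v)) Hq0);
      [apply Rdiv_lt_0_compat; auto | unfold g1; now rewrite !Rmult_0_l, !Rplus_0_r | | |].
    + intros eta Heta.
      destruct (level_dt_continuous g1 X1 Y1 eta Heta) as [dd [Hdd Pdd]].
      exists (Rmin dd (dd / N)). split; [apply Rmin_pos; auto; apply Rdiv_lt_0_compat; auto |].
      intros xi h H1 H2.
      pose proof (Rmin_l dd (dd / N)). pose proof (Rmin_r dd (dd / N)).
      destruct (Rabs_scale_lt h u v dd Hdd) as [Hu Hv]; [unfold N in *; lra |].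
      rewrite !Rmult_0_l, !Rplus_0_r. apply Pdd; [lra | |];
        [replace (X1 + h * u - X1) with (h * u) by ring | replace (Y1 + h * v - Y1) with (h * v) by ring];
        assumption.
    + intros h Hh. rewrite Rplus_0_l.
      destruct (Rabs_scale_lt h u v eb Heb Hh) as [Hu Hv].
      assert (Wh : W (X1 + h * u, Y1 + h * v)).
      { apply Pb; simpl; [replace (X1 + h * u - X1) with (h * u) by ring
                         | replace (Y1 + h * v - Y1) with (h * v) by ring]; assumption. }
      destruct (implicit_root_increment _ _ (W_solves _ Wq1) (W_solves _ Wh)) as [xi [E1 [E2 E3]]].
      simpl in E1, E2, E3. exists xi. split; [exact E1 |]. split; [exact E2 |].
      unfold g1. rewrite <- E3. ring.
    + rewrite !Rmult_0_l, !Rplus_0_r. now apply level_dt_bounds.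
  - simpl. rewrite !Rmult_0_l, !Rplus_0_r. reflexivity.
Qed.

Lemma implicit_root_partial_x q : W q -> partial_x implicit_root q
  (- (Da O (implicit_root q) * implicit_root q + K) / level_dt (implicit_root q) (fst q) (snd q)).
Proof.
  intro Wq. apply partial_x_of_line.
  eapply derivable_pt_lim_value; [exact (implicit_root_line_derivative q 1 0 Wq) |].
  f_equal. ring.
Qed.

Lemma implicit_root_partial_y q : W q -> partial_y implicit_root q
  (- Db O (implicit_root q) / level_dt (implicit_root q) (fst q) (snd q)).
Proof.
  intro Wq. apply partial_y_of_line.
  eapply derivable_pt_lim_value; [exact (implicit_root_line_derivative q 0 1 Wq) |].
  f_equal. ring.
Qed.

Lemma implicit_root_cont2 q1 : W q1 -> cont2_at implicit_root q1.
Proof.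
  intros Wq1 eps Heps. destruct (W_open _ Wq1) as [eb [Heb Pb]].
  set (g1 := implicit_root q1).
  set (q0 := Rabs (level_dt x0 1 y0)).
  assert (Hq0 : 0 < q0) by (apply Rabs_pos_lt; auto).
  set (BB := Rabs (Da O g1 * g1 + K) + Rabs (Db O g1) + 1).
  assert (HBB : 1 <= BB)
    by (unfold BB; pose proof (Rabs_pos (Da O g1 * g1 + K)); pose proof (Rabs_pos (Db O g1)); lra).
  set (e := Rmin eb (eps * q0 / (4 * BB))).
  assert (He1 : e <= eb) by apply Rmin_l. assert (He2 : e <= eps * q0 / (4 * BB)) by apply Rmin_r.
  assert (He : 0 < e) by (apply Rmin_pos; auto; apply Rdiv_lt_0_compat; nra).
  exists e; split; auto. intros q H1 H2.
  assert (Wq : W q) by (apply Pb; lra).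
  destruct (implicit_root_increment _ _ (W_solves _ Wq1) (W_solves _ Wq)) as [xi [_ [E2 E3]]].
  fold g1 q0 in E2, E3.
  (* |level_dt| > q0/2 turns the increment relation into a Lipschitz-type bound. *)
  assert (PB := Rabs_lin_comb_le (Da O g1 * g1 + K) (Db O g1) (fst q) (snd q) (fst q1) (snd q1) e H1 H2).
  assert (EE : Rabs (level_dt xi (fst q) (snd q)) * Rabs (implicit_root q - g1) =
     Rabs ((Da O g1 * g1 + K) * (fst q - fst q1) + Db O g1 * (snd q - snd q1))).
  { rewrite <- Rabs_mult, <- Rabs_Ropp. f_equal. lra. }
  assert (Be : BB * e <= eps * q0 / 4).
  { apply Rle_trans with (BB * (eps * q0 / (4 * BB))); [apply Rmult_le_compat_l; lra | right; field; lra]. }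
  assert (Hab : (Rabs (Da O g1 * g1 + K) + Rabs (Db O g1)) * e < BB * e) by (unfold BB; nra).
  pose proof (Rabs_pos (implicit_root q - g1)).
  nra.
Qed.

End ImplicitFunction.

(** * The local inverse of [linearize] *)

Section LocalInverse.

Variables x0 y0 r d : R.
Hypotheses (Hr : 0 < r) (Hr_half : r <= 1/2) (Hd : 0 < d) (Hd_small : 2 * d * (1 + Rabs y0) < r).
Hypothesis Q0_neq0 : level_dt x0 1 y0 <> 0.
Hypothesis level_dt_close : forall t X Y,
  Rabs (t - x0) < r -> Rabs (X - 1) < r -> Rabs (Y - y0) < r ->
  Rabs (level_dt t X Y - level_dt x0 1 y0) < Rabs (level_dt x0 1 y0) / 2.
Hypothesis level_root : forall X Y, box 1 y0 d (X, Y) ->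
  exists t, Rabs (t - x0) < r /\ level t X Y = 0.

Definition inverse_map (q : pt) : pt := (implicit_root x0 r q, snd q / fst q).

Definition linearize_domain (q : pt) : Prop :=
  box x0 y0 r q /\ web_F q <> 0 /\ box 1 y0 d (linearize q).

Lemma d_lt_r : d < r.
Proof. pose proof (Rabs_pos y0). nra. Qed.

Lemma box_root_solves q : box 1 y0 d q -> root_solves x0 y0 r q.
Proof.
  intros [B1 B2]. pose proof d_lt_r.
  destruct q as [X Y]. destruct (implicit_root_spec x0 r (X, Y)) as [R E].
  { apply level_root. split; assumption. }
  repeat split; auto; lra.
Qed.

Lemma box_fst_gt_half q : box 1 y0 d q -> 1/2 < fst q.
Proof. intros [B1 _]. pose proof d_lt_r. split_Rabs; lra. Qed.

Lemma web_F_inverse_map q : box 1 y0 d q -> web_F (inverse_map q) = / fst q.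
Proof.
  intro Hb. pose proof (box_fst_gt_half q Hb) as HX.
  destruct (box_root_solves q Hb) as [_ [_ [_ E]]].
  unfold web_F, fab, inverse_map, level in *; simpl in *.
  apply Rmult_eq_reg_r with (fst q); [| lra]. rewrite Rinv_l by lra.
  set (t := implicit_root x0 r q) in *.
  replace ((Da O t * t + Db O t * (snd q / fst q) + K) * fst q)
    with ((Da O t * t + K) * fst q + Db O t * snd q) by (field; lra).
  lra.
Qed.

Lemma linearize_inverse_map q : box 1 y0 d q -> linearize (inverse_map q) = q.
Proof.
  intro Hb. pose proof (box_fst_gt_half q Hb) as HX.
  unfold linearize. rewrite (web_F_inverse_map q Hb).
  destruct q as [X Y]; simpl in *. f_equal; field; lra.
Qed.

Lemma inverse_map_linearize q : linearize_domain q -> inverse_map (linearize q) = q.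
Proof.
  destruct q as [x y]. intros [[Bx By] [Fq Wq]]. pose proof d_lt_r.
  pose proof Wq as [W1 W2].
  destruct (box_root_solves _ Wq) as [_ [_ [R E]]].
  unfold inverse_map. f_equal.
  - apply (level_root_unique x0 y0 r level_dt_close (fst (linearize (x, y))) (snd (linearize (x, y))));
      auto; try lra.
    exact (level_linearize (x, y) Fq).
  - unfold linearize in *; simpl in *. field. exact Fq.
Qed.

Lemma Rabs_ratio_sub_lt X Y : Rabs (X - 1) < d -> Rabs (Y - y0) < d -> Rabs (Y / X - y0) < r.
Proof.
  intros H1 H2. pose proof d_lt_r.
  assert (HX : 1/2 < X) by (split_Rabs; lra).
  replace (Y / X - y0) with (((Y - y0) - y0 * (X - 1)) * / X) by (field; lra).
  rewrite Rabs_mult, Rabs_inv, (Rabs_right X) by lra.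
  assert (N : Rabs ((Y - y0) - y0 * (X - 1)) < d * (1 + Rabs y0)).
  { unfold Rminus at 1. eapply Rle_lt_trans; [apply Rabs_triang |]. rewrite Rabs_Ropp, Rabs_mult.
    pose proof (Rabs_pos y0). pose proof (Rabs_pos (X - 1)). nra. }
  apply Rmult_lt_reg_r with X; [lra |]. rewrite Rmult_assoc, Rinv_l, Rmult_1_r by lra.
  pose proof (Rabs_pos ((Y - y0) - y0 * (X - 1))). nra.
Qed.

Lemma inverse_map_domain q : box 1 y0 d q -> linearize_domain (inverse_map q).
Proof.
  intro Hb. split; [| split].
  - destruct (box_root_solves q Hb) as [_ [_ [R _]]]. destruct Hb as [B1 B2].
    split; [exact R | apply Rabs_ratio_sub_lt; assumption].
  - rewrite (web_F_inverse_map q Hb). apply Rinv_neq_0_compat.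
    pose proof (box_fst_gt_half q Hb); lra.
  - rewrite (linearize_inverse_map q Hb). exact Hb.
Qed.

Lemma open2_linearize_domain : open2 linearize_domain.
Proof.
  intros q [Bq [Fq Wq]].
  destruct (box_nbhd _ _ _ _ Bq) as [e1 [He1 P1]].
  destruct (cont2_at_neq0_nbhd _ q (cont2_at_web_F q) Fq) as [e2 [He2 P2]].
  destruct (cont2_at_linearize q Fq) as [C1 C2].
  destruct (cont2_at_preimage_box 1 y0 d _ _ q C1 C2 Wq) as [e3 [He3 P3]].
  exists (Rmin e1 (Rmin e2 e3)). split; [repeat apply Rmin_pos; auto |].
  pose proof (Rmin_l e1 (Rmin e2 e3)). pose proof (Rmin_r e1 (Rmin e2 e3)).
  pose proof (Rmin_l e2 e3). pose proof (Rmin_r e2 e3).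
  intros q' Hq1 Hq2. split; [apply P1; lra |]. split; [apply P2; lra |].
  destruct (linearize q') eqn:E. rewrite <- E. apply P3; lra.
Qed.

Lemma smooth2_inverse_map :
  smooth2 (box 1 y0 d) (fun q => fst (inverse_map q)) /\
  smooth2 (box 1 y0 d) (fun q => snd (inverse_map q)).
Proof.
  set (g := implicit_root x0 r).
  assert (HA : atoms_smooth_on (root_atoms g) (box 1 y0 d)).
  { apply root_atoms_smooth; [apply open2_box | intros q Hb .. ].
    - apply (implicit_root_level_dt_neq0 x0 y0 r) with (W := box 1 y0 d); auto using box_root_solves.
    - apply (implicit_root_partial_x x0 y0 r) with (W := box 1 y0 d);
        auto using box_root_solves, open2_box.
    - apply (implicit_root_partial_y x0 y0 r) with (W := box 1 y0 d);
        auto using box_root_solves, open2_box.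
    - apply (implicit_root_cont2 x0 y0 r) with (W := box 1 y0 d);
        auto using box_root_solves, open2_box. }
  split.
  - apply (smooth2_eval _ _ HA (EAtom 2 0)). intros q _; exact I.
  - apply (smooth2_eval _ _ HA (EMul EY (EInv EX))).
    intros q Hb. simpl. pose proof (box_fst_gt_half q Hb). repeat split; lra.
Qed.

Lemma diffeo_linearize : diffeo linearize_domain (box 1 y0 d) linearize inverse_map.
Proof.
  destruct (smooth2_linearize linearize_domain open2_linearize_domain) as [S1 S2];
    [intros q Vq; apply Vq |].
  destruct smooth2_inverse_map as [S3 S4].
  split; [exact open2_linearize_domain |]. split; [apply open2_box |].
  split; [intros q Vq; apply Vq |]. split; [exact inverse_map_domain |].
  split; [exact inverse_map_linearize |]. split; [exact linearize_inverse_map |].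
  tauto.
Qed.

End LocalInverse.

Lemma linearize_local_diffeo x0 y0 e : 0 < e -> web_F (x0, y0) = 1 -> level_dt x0 1 y0 <> 0 ->
  exists (V W : pt -> Prop) (psi : pt -> pt), V (x0, y0) /\ (forall q, V q -> box x0 y0 e q) /\
    (forall q, V q -> web_F q <> 0) /\ diffeo V W linearize psi.
Proof.
  intros He F1 Q0_neq0.
  assert (level0 : level x0 1 y0 = 0) by (unfold level, web_F, fab in *; simpl in *; lra).
  destruct (level_dt_continuous x0 1 y0 (Rabs (level_dt x0 1 y0) / 2)) as [dQ [HdQ PQ]].
  { pose proof (Rabs_pos_lt _ Q0_neq0). lra. }
  set (r := Rmin (Rmin dQ e) (1/2)).
  assert (Hr1 : r <= dQ) by (unfold r; eapply Rle_trans; [apply Rmin_l | apply Rmin_l]).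
  assert (Hr2 : r <= e) by (unfold r; eapply Rle_trans; [apply Rmin_l | apply Rmin_r]).
  assert (Hr3 : r <= 1/2) by (unfold r; apply Rmin_r).
  assert (Hr : 0 < r) by (unfold r; repeat apply Rmin_pos; lra).
  assert (close : forall t X Y, Rabs (t - x0) < r -> Rabs (X - 1) < r -> Rabs (Y - y0) < r ->
    Rabs (level_dt t X Y - level_dt x0 1 y0) < Rabs (level_dt x0 1 y0) / 2)
    by (intros; apply PQ; lra).
  destruct (level_root_exists x0 y0 r Hr level0 Q0_neq0 close) as [d [Hd [Hd_small Hroot]]].
  exists (linearize_domain x0 y0 r d), (box 1 y0 d), (inverse_map x0 r).
  split; [| split; [| split]].
  - unfold linearize_domain, linearize, box. rewrite F1, Rinv_1, Rdiv_1_r. simpl.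
    rewrite !Rminus_diag, Rabs_R0. repeat split; lra.
  - intros q [[B1 B2] _]. split; lra.
  - intros q Vq; apply Vq.
  - now apply diffeo_linearize.
Qed.

End Web.

Lemma transversal_level_dt Da Db p : derivative_tower Da -> derivative_tower Db ->
  transversal_at snd (fab (Da O) (Db O)) p -> level_dt Da Db (fst p) 1 (snd p) <> 0.
Proof.
  destruct p as [x0 y0]. intros Ta Tb [u [v [[Gu1 Gu2] [[Gv1 Gv2] Det]]]].
  unfold partial_x, partial_y in *; simpl in *.
  assert (U1 : fst u = 0)
    by (apply (uniqueness_limite (fun _ => y0) x0); auto; apply derivable_pt_lim_const).
  assert (U2 : snd u = 1)
    by (apply (uniqueness_limite (fun t => t) y0); auto; apply derivable_pt_lim_id).
  rewrite U1, U2 in Det.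
  (* With [K = 1], [level t 1 y0] is [f (t, y0)]. *)
  assert (D : derivable_pt_lim (fun t => fab (Da O) (Db O) (t, y0)) x0 (level_dt Da Db x0 1 y0)).
  { apply derivable_pt_lim_locally_ext with (d := 1) (f := fun t => level Da Db 1 t 1 y0);
      [exact (derivable_level Da Db Ta Tb 1 1 y0 x0) | lra |].
    intros t _. unfold level, fab; simpl; ring. }
  rewrite (uniqueness_limite _ _ _ _ D Gv1). lra.
Qed.

Theorem mainTheorem2 (a b : R -> R) (Ha : smooth1 a) (Hb : smooth1 b)
  (U : pt -> Prop) (Hweb : is_3web U fst snd (fab a b)) :
  forall p : pt, U p ->
    exists (V W : pt -> Prop) (phi psi : pt -> pt),
      V p /\ (forall q, V q -> U q) /\ diffeo V W phi psi /\
      leaves_to_lines V phi fst /\ leaves_to_lines V phi snd /\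
      leaves_to_lines V phi (fab a b).
Proof.
  intros [x0 y0] Hp.
  destruct Ha as [Da [<- Ta]], Hb as [Db [<- Tb]], Hweb as [U_open Htr].
  destruct (U_open _ Hp) as [e [He Ue]].
  set (K := 1 - fab (Da O) (Db O) (x0, y0)).
  assert (F1 : web_F Da Db K (x0, y0) = 1) by (unfold web_F, K; ring).
  assert (Q0_neq0 := transversal_level_dt Da Db (x0, y0) Ta Tb (proj2 (proj2 (Htr _ Hp)))).
  destruct (linearize_local_diffeo Da Db Ta Tb K x0 y0 e He F1 Q0_neq0)
    as [V [W [psi [Vp [Ve [VF Hdiff]]]]]].
  exists V, W, (linearize Da Db K), psi.
  split; [exact Vp |]. split; [intros q Vq; destruct (Ve q Vq); apply Ue; assumption |].
  split; [exact Hdiff |].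
  split; [exact (linearize_vertical_lines Da Db K V VF) |].
  split; [exact (linearize_horizontal_lines Da Db K V) |].
  exact (linearize_web_lines Da Db K V).
Qed.
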